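(* Let $\widetilde D,\widetilde C\in\mathbb{R}^{d\times d}$ satisfy Condition $\widetilde A$, let $K$ be the unique symmetric positive definite solution of $2\widetilde D=\widetilde CK+K\widetilde C^T$, and set $C:=K^{-1/2}\widetilde CK^{1/2}$, $C_S:=\frac12(C+C^T)$, $C_{AS}:=\frac12(C-C^T)$. For $m\in\mathbb N_0$ define $$T_m:=\sum_{j=0}^m C_{AS}^j C_S (C_{AS}^T)^j,\qquad \widetilde T_m:=\sum_{j=0}^m \widetilde C^j\widetilde D(\widetilde C^T)^j.$$ Then for every $m\in\mathbb N_0$: $T_m$ is positive definite if and only if $\widetilde T_m$ is positive definite. In particular the minimal $m$ with $T_m>0$ equals the minimal $m$ with $\widetilde T_m>0$.
   Context: Condition $\widetilde A$: (1) $\widetilde D$ is symmetric positive semi-definite; (2) there is no non-trivial $\widetilde C^T$-invariant subspace of $\ker\widetilde D$; (3) $\widetilde C$ is positive stable, i.e. all its eigenvalues have positive real part. Under this condition the symmetric positive definite solution $K$ of the Lyapunov equation exists and is unique, and $K^{-1/2}\widetilde DK^{-1/2}=C_S$. The minimal $m$ with $T_m>0$ (resp. $\widetilde T_m>0$) is called the hypocoercivity index. *)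

From HB Require Import structures.
From mathcomp Require Import all_boot all_order all_algebra.
From mathcomp Require Import complex.
From mathcomp Require Import reals.
Set Implicit Arguments. Unset Strict Implicit. Unset Printing Implicit Defensive.
Import Order.TTheory GRing.Theory Num.Theory.
Local Open Scope ring_scope.
Local Open Scope complex_scope.

Section Defs.
Variable R : realType.
Variable d : nat.

Definition posdef (A : 'M[R]_d) : Prop :=
  A^T = A /\ forall x : 'cV[R]_d, x != 0 -> 0 < (x^T *m A *m x) 0 0.

Definition possemidef (A : 'M[R]_d) : Prop :=
  A^T = A /\ forall x : 'cV[R]_d, 0 <= (x^T *m A *m x) 0 0.

Definition positive_stable (A : 'M[R]_d) : Prop :=
  forall lam : R[i],
    eigenvalue (map_mx (fun x : R => x%:C) A) lam -> 0 < Re lam.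

(* A subspace of R^d is encoded as the row space of V, each row being v^T;
   C^T-invariance of {v} reads (V *m C <= V) in row form, and v in ker D
   (D v = 0) reads v^T D^T = 0, i.e. V <= kermx D^T. *)
Definition no_inv_subspace_ker (Ct Dt : 'M[R]_d) : Prop :=
  forall V : 'M[R]_d,
    (V *m Ct <= V)%MS -> (V <= kermx Dt^T)%MS -> V = 0.

Definition condition_A (Dt Ct : 'M[R]_d) : Prop :=
  [/\ possemidef Dt, no_inv_subspace_ker Ct Dt & positive_stable Ct].

Definition Tm (C : 'M[R]_d) (m : nat) : 'M[R]_d :=
  let CS := 2%:R^-1 *: (C + C^T) in
  let CAS := 2%:R^-1 *: (C - C^T) in
  \sum_(j < m.+1) (CAS ^+ j *m CS *m (CAS^T) ^+ j).

Definition Ttm (Ct Dt : 'M[R]_d) (m : nat) : 'M[R]_d :=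
  \sum_(j < m.+1) (Ct ^+ j *m Dt *m (Ct^T) ^+ j).

End Defs.

From HB Require Import structures.
From mathcomp Require Import all_boot all_order all_algebra.
From mathcomp Require Import complex.
From mathcomp Require Import reals.
From mathcomp Require Import ring lra.
Import Order.TTheory GRing.Theory Num.Theory.
Local Open Scope ring_scope.

(* For a positive semi-definite P, the Gramian sum_(j<=m) V^j P (V^T)^j is
   positive definite iff x = 0 is the only vector with P (V^T)^j x = 0 for all
   j <= m.  The Lyapunov equation gives C_S = S^-1 Dt S^-1 and C^T = S Ct^T S^-1,
   and C^T = C_S + C_AS^T; adding P = C_S to N = C_AS^T does not change the set
   of x with P N^j x = 0 (j <= m), and conjugating by S^-1 transports this
   kernel condition for (C_S, C_AS^T) to the one for (Dt, Ct^T). *)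

Lemma nonneg_quadratic_linear_coef_eq0 (R : realFieldType) (a b : R) :
  (forall t : R, 0 <= t * a + t ^+ 2 * b) -> a = 0.
Proof.
move=> ge0; have b_ge0 : 0 <= b by have := ge0 1; have := ge0 (-1); lra.
pose t := - a / (b + 1).
have ts : t * (b + 1) = - a by rewrite mulfVK // gt_eqF //; lra.
have scaled : (b + 1) ^+ 2 * (t * a + t ^+ 2 * b) = - a ^+ 2.
  transitivity ((t * (b + 1)) * a * (b + 1) + (t * (b + 1)) ^+ 2 * b); first ring.
  by rewrite ts; ring.
have : 0 <= - a ^+ 2 by rewrite -scaled mulr_ge0 ?sqr_ge0.
by rewrite oppr_ge0 => a2_le0; apply/eqP; rewrite -sqrf_eq0 eq_le a2_le0 sqr_ge0.
Qed.

Lemma trmxX (T : comPzRingType) (n : nat) (V : 'M[T]_n) (j : nat) :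
  (V ^+ j)^T = V^T ^+ j.
Proof.
elim: j => [|j IHj]; first by rewrite !expr0 trmx1.
by rewrite exprS exprSr -!mulmxE trmx_mul IHj.
Qed.

Section KernelChain.
Context {F : fieldType} {n : nat}.
Implicit Types (P N U W : 'M[F]_n) (x : 'cV[F]_n).

Definition observable_within P N (m : nat) : Prop :=
  forall x, (forall j, (j <= m)%N -> P *m (N ^+ j *m x) = 0) -> x = 0.

Lemma mulmx_exprDl_ker P N x k :
  (forall j, (j < k)%N -> P *m (N ^+ j *m x) = 0) -> (P + N) ^+ k *m x = N ^+ k *m x.
Proof.
elim: k => [|k IHk] ker_x; first by rewrite !expr0.
rewrite !exprS -!mulmxE -!mulmxA IHk => [|j lt_jk]; last exact/ker_x/ltnW.
by rewrite mulmxDl ker_x // add0r.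
Qed.

Lemma ker_exprDl P N x m :
  (forall j, (j <= m)%N -> P *m (N ^+ j *m x) = 0) ->
  forall j, (j <= m)%N -> P *m ((P + N) ^+ j *m x) = 0.
Proof.
move=> ker_x j le_jm; rewrite mulmx_exprDl_ker ?ker_x // => i lt_ij.
exact/ker_x/ltnW/(leq_trans lt_ij).
Qed.

Lemma observable_withinDl P N m :
  observable_within P (P + N) m <-> observable_within P N m.
Proof.
split=> obs x ker_x; apply: obs; first exact: ker_exprDl.
have ker_PN i : (i <= m)%N -> (- P) *m ((P + N) ^+ i *m x) = 0.
  by move=> le_im; rewrite mulNmx ker_x ?oppr0.
move=> j le_jm; have := ker_exprDl (- P) (P + N) x m ker_PN j le_jm.
by rewrite addKr mulNmx => /eqP; rewrite oppr_eq0 => /eqP.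
Qed.

Lemma conjmxX W N (j : nat) : W \in unitmx ->
  (invmx W *m N *m W) ^+ j = invmx W *m N ^+ j *m W.
Proof.
move=> W_unit; elim: j => [|j IHj]; first by rewrite !expr0 mulmx1 mulVmx.
by rewrite !exprS -!mulmxE IHj !mulmxA mulmxK.
Qed.

Lemma observable_within_conj U P W N m : U \in unitmx -> W \in unitmx ->
  observable_within (U *m P *m W) (invmx W *m N *m W) m <-> observable_within P N m.
Proof.
move=> U_unit W_unit.
have conj_ker x j : U *m P *m W *m ((invmx W *m N *m W) ^+ j *m x) =
                    U *m (P *m (N ^+ j *m (W *m x))).
  by rewrite conjmxX // !mulmxA mulmxK.
split=> obs x ker_x.
  apply: (can_inj (mulKVmx W_unit)); rewrite mulmx0; apply: obs => j le_jm.
  by rewrite conj_ker mulKVmx // ker_x // mulmx0.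
apply: (can_inj (mulKmx W_unit)); rewrite mulmx0; apply: obs => j le_jm.
by apply: (can_inj (mulKmx U_unit)); rewrite -conj_ker ker_x ?mulmx0.
Qed.

End KernelChain.

Section Gramian.
Context {R : realType} {d : nat}.
Implicit Types (P V B : 'M[R]_d) (x y : 'cV[R]_d).

Definition bilin P x y : R := (x^T *m P *m y) 0 0.

Definition gramian V P (m : nat) : 'M[R]_d :=
  \sum_(j < m.+1) V ^+ j *m P *m V^T ^+ j.

Lemma bilin_sym P x y : P^T = P -> bilin P x y = bilin P y x.
Proof.
move=> sym_P; rewrite /bilin -[y^T *m P *m x]trmxK [RHS]mxE.
by rewrite !trmx_mul !trmxK sym_P mulmxA.
Qed.

Lemma bilin_addZ P x y (t : R) :
  bilin P (x + t *: y) (x + t *: y) =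
  bilin P x x + t * (bilin P x y + bilin P y x) + t ^+ 2 * bilin P y y.
Proof.
rewrite /bilin [(_ + _)^T]linearD /= [(_ *: y)^T]linearZ /=.
rewrite !mulmxDl !mulmxDr -!scalemxAl -!scalemxAr.
by rewrite !mxE; ring.
Qed.

Lemma possemidef_bilin_eq0 P x y :
  possemidef P -> bilin P x x = 0 -> bilin P y x = 0.
Proof.
move=> [sym_P ge0_P] qx0.
have : bilin P x y + bilin P y x = 0.
  apply: (@nonneg_quadratic_linear_coef_eq0 _ _ (bilin P y y)) => t.
  have := ge0_P (x + t *: y).
  by rewrite -[X in _ <= X]/(bilin P _ _) bilin_addZ qx0 add0r.
rewrite (bilin_sym P x y sym_P) -mulr2n -mulr_natr.
by move/eqP; rewrite mulf_eq0 pnatr_eq0 orbF => /eqP.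
Qed.

Lemma possemidef_mulmx_eq0 P x :
  possemidef P -> bilin P x x = 0 -> P *m x = 0.
Proof.
move=> psd_P qx0; apply/matrixP => i j; rewrite (ord1 j) [RHS]mxE.
have := possemidef_bilin_eq0 P x (delta_mx i 0) psd_P qx0.
by rewrite /bilin trmx_delta -mulmxA -rowE => <-; rewrite [RHS]mxE.
Qed.

Lemma possemidef_congr P B : possemidef P -> possemidef (B^T *m P *m B).
Proof.
move=> [sym_P ge0_P]; split; first by rewrite !trmx_mul trmxK sym_P mulmxA.
by move=> x; have := ge0_P (B *m x); rewrite trmx_mul !mulmxA.
Qed.

Lemma gramian_sym V P m : P^T = P -> (gramian V P m)^T = gramian V P m.
Proof.
move=> sym_P; rewrite linear_sum; apply: eq_bigr => j _ /=.
by rewrite !trmx_mul sym_P -trmxX trmxK !mulmxA.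
Qed.

Lemma bilin_gramian V P m x :
  bilin (gramian V P m) x x = \sum_(j < m.+1) bilin P (V^T ^+ j *m x) (V^T ^+ j *m x).
Proof.
rewrite /bilin mulmx_sumr mulmx_suml summxE; apply: eq_bigr => j _.
by rewrite trmx_mul -trmxX trmxK !mulmxA.
Qed.

Lemma posdef_gramianP V P m : possemidef P ->
  posdef (gramian V P m) <-> observable_within P V^T m.
Proof.
move=> psd_P; have [sym_P ge0_P] := psd_P; split.
  move=> [_ pos] x ker_x; apply/eqP; apply: contraT => x_neq0.
  have := pos x x_neq0; rewrite -/(bilin _ x x) bilin_gramian big1 ?ltxx // => j _.
  by rewrite /bilin -mulmxA ker_x ?mulmx0 ?mxE // -ltnS.
move=> obs; split; first exact: gramian_sym.
move=> x x_neq0; rewrite -/(bilin _ x x) bilin_gramian.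
have ge0_terms (j : 'I_m.+1) : true -> 0 <= bilin P (V^T ^+ j *m x) (V^T ^+ j *m x).
  by move=> _; apply: ge0_P.
rewrite lt_def sumr_ge0 ?andbT //; apply: contra x_neq0 => /eqP q0.
apply/eqP/obs => j le_jm; apply: possemidef_mulmx_eq0 => //.
exact: (psumr_eq0P ge0_terms q0 (i := Ordinal (le_jm : (j < m.+1)%N)) isT).
Qed.

Lemma posdef_unitmx B : posdef B -> B \in unitmx.
Proof.
move=> [sym_B pos_B]; rewrite unitmxE unitfE; apply/negP => /det0P [v v_neq0 vB0].
have := pos_B v^T; rewrite trmx_eq0 v_neq0 -mulmxA -{1}sym_B -trmx_mul vB0.
by rewrite trmx0 mulmx0 mxE ltxx => /(_ isT).
Qed.

End Gramian.

Lemma trmx_sym_skew_decomp (R : numFieldType) (n : nat) (A : 'M[R]_n) :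
  A^T = 2%:R^-1 *: (A + A^T) + (2%:R^-1 *: (A - A^T))^T.
Proof.
apply/matrixP => i j; rewrite !mxE.
have two_neq0 : (2%:R : R) != 0 by rewrite pnatr_eq0.
by field.
Qed.

Lemma trmx_conj_sym (R : fieldType) (n : nat) (S A : 'M[R]_n) : S^T = S ->
  (invmx S *m A *m S)^T = invmx (invmx S) *m A^T *m invmx S.
Proof. by move=> sym_S; rewrite !trmx_mul trmx_inv sym_S invmxK mulmxA. Qed.

Lemma sym_part_lyapunov (R : numFieldType) (n : nat) (Dt Ct S : 'M[R]_n) :
  S \in unitmx -> S^T = S -> 2%:R *: Dt = Ct *m (S *m S) + (S *m S) *m Ct^T ->
  let C := invmx S *m Ct *m S in 2%:R^-1 *: (C + C^T) = invmx S *m Dt *m invmx S.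
Proof.
move=> S_unit sym_S lyapunov C; have two_neq0 : (2%:R : R) != 0 by rewrite pnatr_eq0.
rewrite -[Dt](scalerK two_neq0) -scalemxAr -scalemxAl lyapunov.
rewrite trmx_conj_sym // invmxK; congr (_ *: _).
by rewrite mulmxDr mulmxDl !mulmxA mulmxK // mulVmx // mul1mx.
Qed.

Theorem proposition3p11 (R : realType) (d : nat) (Dt Ct K S : 'M[R]_d) :
  condition_A Dt Ct ->
  posdef K ->
  2%:R *: Dt = Ct *m K + K *m Ct^T ->
  posdef S -> S *m S = K ->
  forall m : nat,
    posdef (Tm (invmx S *m Ct *m S) m) <-> posdef (Ttm Ct Dt m).
Proof.
move=> [psd_Dt _ _] _ lyap pd_S eK m; subst K.
have [sym_S _] := pd_S.
have S_unit : S \in unitmx by apply: posdef_unitmx.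
set C := invmx S *m Ct *m S.
have CS_eq : 2%:R^-1 *: (C + C^T) = invmx S *m Dt *m invmx S.
  by apply: sym_part_lyapunov.
have psd_CS : possemidef (2%:R^-1 *: (C + C^T)).
  by rewrite CS_eq -{1}sym_S -trmx_inv; apply: possemidef_congr.
have -> : Tm C m = gramian (2%:R^-1 *: (C - C^T)) (2%:R^-1 *: (C + C^T)) m by [].
have -> : Ttm Ct Dt m = gramian Ct Dt m by [].
rewrite (posdef_gramianP _ _ m psd_CS) (posdef_gramianP _ _ m psd_Dt).
rewrite -observable_withinDl -trmx_sym_skew_decomp CS_eq trmx_conj_sym //.
by apply: observable_within_conj; rewrite unitmx_inv.
Qed.
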